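(* Consider any of the three variants (F, O, T) of the two-round protocol described in the context, with parameters $\epsilon_1,\epsilon_2\ge 0$, $d_{max}\in\mathbb Z_{\ge0}$, $\mu\in[0,\frac{e^{\epsilon_1}}{e^{\epsilon_1}+1}]$, where all neighbor lists considered have at most $d_{max}$ ones. For $i\in[n]$ let $\mathcal R_i^1$ be the first-round randomizer of $v_i$ (mapping $\mathbf a_i$ to $\mathbf r_i$) and $\mathcal R_i^2(M_i)$ the second-round randomizer (mapping $\mathbf a_i$ to $\hat w_i$, given the message $M_i$), and let $\mathcal R_i(\mathbf a_i)=(\mathcal R_i^1(\mathbf a_i),\mathcal R_i^2(M_i)(\mathbf a_i))$. Then each $\mathcal R_i$ satisfies $(\epsilon_1+\epsilon_2)$-edge LDP, and $(\mathcal R_1,\dots,\mathcal R_n)$ satisfies $(\epsilon_1+\epsilon_2)$-relationship DP.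
   Context: Let $G$ be a simple undirected graph on $V=\{v_1,\dots,v_n\}$ with symmetric adjacency matrix $\mathbf A=(a_{i,j})\in\{0,1\}^{n\times n}$, $a_{i,i}=0$; $\mathbf a_i$ is the $i$-th row (neighbor list of $v_i$). $ARR_{\epsilon,\mu}:\{0,1\}\to\{0,1\}$ is the randomized map with $\Pr[ARR_{\epsilon,\mu}(1)=1]=\mu$ and $\Pr[ARR_{\epsilon,\mu}(0)=1]=\mu e^{-\epsilon}$. Protocol: let $\rho=e^{-\epsilon_1}$ and $\mu^*=\mu,\mu^2,\mu^3$ in variants F, O, T respectively. Round 1: each $v_i$ computes $r_{i,j}=ARR_{\epsilon_1,\mu}(a_{i,j})$ for all $j<i$ (all independent) and sends $\mathbf r_i=(r_{i,1},\dots,r_{i,i-1})$. The server forms the set of unordered pairs $E'=\{\{v_j,v_k\}: j<k,\ r_{k,j}=1\}$. Round 2: the server sends $v_i$ the message $M_i=\{\{v_j,v_k\}\in E': j<k<i\}$ (F), $M_i=\{\{v_j,v_k\}\in E':\{v_i,v_k\}\in E',\ j<k<i\}$ (O), or $M_i=\{\{v_j,v_k\}\in E':\{v_i,v_j\}\in E',\{v_i,v_k\}\in E',\ j<k<i\}$ (T). User $v_i$ computes $t_i=|\{(j,k):j<k<i,\ a_{i,j}=a_{i,k}=1,\ \{v_j,v_k\}\in M_i\}|$, $s_i=|\{(j,k):j<k<i,\ a_{i,j}=a_{i,k}=1\}|$, $w_i=t_i-\mu^*\rho s_i$, and sends $\hat w_i=w_i+\mathrm{Lap}(d_{max}/\epsilon_2)$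 (Laplace noise with mean 0 and scale $d_{max}/\epsilon_2$, independent). The server outputs $\hat f_\triangle(G)=\frac{1}{\mu^*(1-\rho)}\sum_{i=1}^n\hat w_i$. Definitions: a local randomizer $\mathcal R$ on $\{0,1\}^n$ satisfies $\epsilon$-edge LDP if $\Pr[\mathcal R(\mathbf a)=s]\le e^\epsilon\Pr[\mathcal R(\mathbf a')=s]$ for all $\mathbf a,\mathbf a'$ differing in one bit and all outputs $s$. A tuple $(\mathcal R_1,\dots,\mathcal R_n)$ (independent randomness) satisfies $\epsilon$-relationship DP if for all graphs $G,G'$ on $V$ differing in exactly one edge, with adjacency rows $\mathbf a_i,\mathbf a_i'$, and all output tuples $(s_1,\dots,s_n)$, $\Pr[(\mathcal R_1(\mathbf a_1),\dots,\mathcal R_n(\mathbf a_n))=(s_1,\dots,s_n)]\le e^\epsilon\Pr[(\mathcal R_1(\mathbf a_1'),\dots,\mathcal R_n(\mathbf a_n'))=(s_1,\dots,s_n)]$. *)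

From HB Require Import structures.
From mathcomp Require Import all_boot all_order all_algebra.
From mathcomp Require Import reals.
From mathcomp Require Import sequences exp.
Set Implicit Arguments. Unset Strict Implicit. Unset Printing Implicit Defensive.
Import Order.TTheory GRing.Theory Num.Theory.
Local Open Scope ring_scope.

Inductive variant := VarF | VarO | VarT.

Section Defs.
Variable R : realType.

Definition mustar (v : variant) (mu : R) : R :=
  match v with VarF => mu | VarO => mu ^+ 2 | VarT => mu ^+ 3 end.

Definition arr_prob (eps mu : R) (a b : bool) : R :=
  if a then (if b then mu else 1 - mu)
  else (if b then mu * expR (- eps) else 1 - mu * expR (- eps)).

(* First-round randomizer R_i^1 of user v_i: pmf of r_i = (r_{i,j})_{j<i}.
   Outputs are encoded as r : 'I_n -> bool, coordinates j >= i being
   fixed to false (they are not part of r_i). *)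
Definition round1_pmf n (eps1 mu : R) (i : 'I_n) (a r : 'I_n -> bool) : R :=
  \prod_(j < n) (if (j < i)%N then arr_prob eps1 mu (a j) (r j)
                 else (if r j then 0 else 1)).

(* Round-1 transcript Rt : Rt k = r_k.  {v_j,v_k} in E' iff r_{max,min} = 1. *)
Definition in_E' n (Rt : 'I_n -> 'I_n -> bool) (j k : 'I_n) : bool :=
  if (j < k)%N then Rt k j else if (k < j)%N then Rt j k else false.

Definition message n (v : variant) (Rt : 'I_n -> 'I_n -> bool) (i j k : 'I_n)
  : bool :=
  [&& (j < k)%N, (k < i)%N, in_E' Rt j k &
     match v with
     | VarF => true
     | VarO => in_E' Rt i k
     | VarT => in_E' Rt i j && in_E' Rt i k
     end].

Definition t_count n (i : 'I_n) (a : 'I_n -> bool) (M : 'I_n -> 'I_n -> bool)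
  : nat :=
  #|[set jk : 'I_n * 'I_n |
      [&& (jk.1 < jk.2)%N, (jk.2 < i)%N, a jk.1, a jk.2 & M jk.1 jk.2]]|.

Definition s_count n (i : 'I_n) (a : 'I_n -> bool) : nat :=
  #|[set jk : 'I_n * 'I_n |
      [&& (jk.1 < jk.2)%N, (jk.2 < i)%N, a jk.1 & a jk.2]]|.

Definition w_val (v : variant) (eps1 mu : R) n (i : 'I_n) (a : 'I_n -> bool)
  (M : 'I_n -> 'I_n -> bool) : R :=
  (t_count i a M)%:R - mustar v mu * expR (- eps1) * (s_count i a)%:R.

Definition lap_pdf (b x : R) : R := expR (- `|x| / b) / (2 * b).

Definition upd_row n (Rt : 'I_n -> 'I_n -> bool) (i : 'I_n) (r : 'I_n -> bool)
  : 'I_n -> 'I_n -> bool := fun k => if k == i then r else Rt k.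

(* Output distribution (pmf in r_i times density in hat w_i) of
   R_i(a_i) = (R_i^1(a_i), R_i^2(M_i)(a_i)), when the other users'
   first-round reports are Rother (M_i may depend on r_i itself in O, T). *)
Definition local_density (v : variant) (eps1 eps2 mu : R) (dmax : nat) n
  (i : 'I_n) (Rother : 'I_n -> 'I_n -> bool)
  (a : 'I_n -> bool) (s : ('I_n -> bool) * R) : R :=
  round1_pmf eps1 mu i a s.1 *
  lap_pdf (dmax%:R / eps2)
    (s.2 - w_val v eps1 mu i a (message v (upd_row Rother i s.1) i)).

Definition joint_density (v : variant) (eps1 eps2 mu : R) (dmax : nat) n
  (A : 'I_n -> 'I_n -> bool)
  (s : ('I_n -> 'I_n -> bool) * ('I_n -> R)) : R :=
  (\prod_(i < n) round1_pmf eps1 mu i (A i) (s.1 i)) *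
  \prod_(i < n) lap_pdf (dmax%:R / eps2)
                  (s.2 i - w_val v eps1 mu i (A i) (message v s.1 i)).

Definition deg_le n (dmax : nat) (a : 'I_n -> bool) : Prop :=
  (#|[pred j | a j]| <= dmax)%N.

Definition differ_one_bit n (a a' : 'I_n -> bool) : Prop :=
  exists j, a j != a' j /\ forall k, k != j -> a k = a' k.

Definition edge_LDP n (D : ('I_n -> bool) -> Prop) (O : Type) (eps : R)
  (dens : ('I_n -> bool) -> O -> R) : Prop :=
  forall a a', D a -> D a' -> differ_one_bit a a' ->
  forall s : O, dens a s <= expR eps * dens a' s.

Definition simple_graph n (A : 'I_n -> 'I_n -> bool) : Prop :=
  (forall u w, A u w = A w u) /\ (forall u, A u u = false).

Definition differ_one_edge n (A A' : 'I_n -> 'I_n -> bool) : Prop :=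
  exists u w, u != w /\ A u w != A' u w /\
    forall x y, A x y != A' x y -> (x == u) && (y == w) || (x == w) && (y == u).

Definition relationship_DP n (D : ('I_n -> 'I_n -> bool) -> Prop) (O : Type)
  (eps : R) (dens : ('I_n -> 'I_n -> bool) -> O -> R) : Prop :=
  forall A A', D A -> D A' -> differ_one_edge A A' ->
  forall s : O, dens A s <= expR eps * dens A' s.

End Defs.

(** ARR changes the probability of each output bit by a factor at most
    [e^eps1] as soon as [mu <= e^eps1 / (e^eps1 + 1)], so the first-round
    report is [eps1]-edge LDP.  Flipping one neighbour bit of [v_i] changes
    [s_i] by at most [d_max] (only pairs through that neighbour are affected)
    and [t_i] by at most as much as [s_i], in the same direction; as
    [0 <= mu^* rho <= 1], [w_i] moves by at most [d_max], and the Laplace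
    mechanism of scale [d_max / eps2] makes [hat w_i] [eps2]-edge LDP.  For
    relationship DP, the edge [{v_u, v_w}] with [u < w] is only seen by [v_w],
    since every user reports on lower indices only: all factors of the joint
    density but those of [v_w] coincide on the two graphs. *)

From HB Require Import structures.
From mathcomp Require Import all_boot all_order all_algebra.
From mathcomp Require Import reals.
From mathcomp Require Import sequences exp.
From mathcomp Require Import ring lra.
Import Order.TTheory GRing.Theory Num.Theory.
Local Open Scope ring_scope.

Lemma ler_prod_change1 {R : numDomainType} {I : finType} {f g : I -> R}
    (i0 : I) {c : R} :
  (forall i, 0 <= f i) -> (forall i, i != i0 -> f i = g i) ->
  f i0 <= c * g i0 -> \prod_i f i <= c * \prod_i g i.
Proof.
move=> f_ge0 fg fg_i0.
rewrite (bigD1 i0) //= [X in _ <= _ * X](bigD1 i0) //= mulrA.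
rewrite [X in _ <= _ * X](eq_bigr f) => [|i /fg //].
by rewrite ler_wpM2r // prodr_ge0.
Qed.

Lemma norm_natB_scaled_le (R : realDomainType) (c : R) (x y d : nat) :
  0 <= c -> c <= 1 -> (x <= y <= d)%N -> `|x%:R - c * y%:R| <= d%:R.
Proof.
move=> c_ge0 c_le1 /andP[]; rewrite -!(ler_nat R) => le_xy le_yd.
have cy_le : c * y%:R <= y%:R by rewrite ler_piMl.
have cy_ge0 : 0 <= c * y%:R by rewrite mulr_ge0.
have x_ge0 : (0 : R) <= x%:R := ler0n _ _.
rewrite ler_norml; apply/andP; split; lra.
Qed.

Section LowerPairs.
Context {n : nat} (i : 'I_n).

Definition lower_pairs (P : 'I_n -> 'I_n -> bool) : {set 'I_n * 'I_n} :=
  [set jk : 'I_n * 'I_n | [&& (jk.1 < jk.2)%N, (jk.2 < i)%N & P jk.1 jk.2]].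

Lemma eq_lower_pairs {P Q : 'I_n -> 'I_n -> bool} :
  (forall j k : 'I_n, (j < k)%N -> (k < i)%N -> P j k = Q j k) ->
  lower_pairs P = lower_pairs Q.
Proof.
move=> PQ; apply/setP => -[j k]; rewrite !inE /=.
by case: ltnP => //= jk; case: ltnP => //= ki; rewrite PQ.
Qed.

Lemma lower_pairsS {P Q : 'I_n -> 'I_n -> bool} :
  (forall j k, P j k -> Q j k) -> lower_pairs P \subset lower_pairs Q.
Proof.
move=> PQ; apply/subsetP => -[j k]; rewrite !inE /=.
by case/and3P=> -> -> /PQ.
Qed.

Lemma card_lower_pairs_split {P Q : 'I_n -> 'I_n -> bool} :
  (forall j k, Q j k -> P j k) ->
  #|lower_pairs P| =
    (#|lower_pairs Q| + #|lower_pairs (fun j k => P j k && ~~ Q j k)|)%N.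
Proof.
move=> QP; rewrite -(cardsID (lower_pairs Q) (lower_pairs P)).
rewrite (setIidPr (lower_pairsS QP)); congr (_ + _)%N.
apply: eq_card => -[j k]; rewrite !inE /=.
by case: (j < k)%N (k < i)%N (P j k) (Q j k) => [] [] [] [].
Qed.

(* Pairs through a fixed vertex [j0] are injectively labelled by their other
   endpoint. *)
Lemma card_lower_pairs_through (j0 : 'I_n) {P : 'I_n -> 'I_n -> bool}
    {a : 'I_n -> bool} :
  (forall j k, P j k -> [&& (j == j0) || (k == j0), a j & a k]) ->
  (#|lower_pairs P| <= #|[pred j | a j]|)%N.
Proof.
move=> Pj0.
pose other (k : 'I_n) := if (j0 < k)%N then (j0, k) else (k, j0).
apply: leq_trans (leq_imset_card other [pred j | a j]).
apply/subset_leq_card/subsetP => -[j k]; rewrite !inE /=.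
case/and3P=> jk _ /Pj0 /and3P[/orP[]/eqP e aj ak];
  rewrite {}e in jk aj ak *; apply/imsetP.
- by exists k; rewrite /other ?jk.
- by exists j; rewrite /other ?ltnNge ?(ltnW jk).
Qed.

End LowerPairs.

Section Protocol.
Variables (R : realType) (eps mu : R).
Hypotheses (eps_ge0 : 0 <= eps) (mu_ge0 : 0 <= mu)
  (mu_le : mu <= expR eps / (expR eps + 1)).

Lemma expR_eps_ge1 : 1 <= expR eps.
Proof. by rewrite -expR0 ler_expR. Qed.

Lemma arr_mu_le1 : mu <= 1.
Proof.
have E1 := expR_eps_ge1.
by apply: le_trans mu_le _; rewrite ler_pdivrMr; lra.
Qed.

Lemma expRN_itv : 0 < expR (- eps) /\ expR (- eps) <= 1.
Proof. by rewrite expR_gt0 expR_le1 oppr_le0. Qed.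

Lemma arr_prob_ge0 a b : 0 <= arr_prob eps mu a b.
Proof.
have mu_le1 := arr_mu_le1; have [r_gt0 r_le1] := expRN_itv.
rewrite /arr_prob; case: a; case: b; rewrite ?subr_ge0 //.
- by rewrite mulr_ge0 // ltW.
- by rewrite mulr_ile1 // ltW.
Qed.

Lemma arr_prob_le a a' b :
  arr_prob eps mu a b <= expR eps * arr_prob eps mu a' b.
Proof.
have E1 := expR_eps_ge1.
have rE : expR eps * expR (- eps) = 1 by rewrite expRxMexpNx_1.
have [r_gt0 r_le1] := expRN_itv.
move: mu_ge0 mu_le; rewrite /arr_prob ler_pdivlMr; last by lra.
move: (expR eps) (expR (- eps)) E1 rE r_gt0 r_le1 => E r *.
by case: a; case: a'; case: b; nra.
Qed.

Variable n : nat.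
Implicit Types (i : 'I_n) (a : 'I_n -> bool) (M : 'I_n -> 'I_n -> bool).

Lemma round1_pmf_ge0 i a r : 0 <= round1_pmf eps mu i a r.
Proof.
by apply: prodr_ge0 => j _; case: ifP => _; [exact: arr_prob_ge0 | case: r].
Qed.

Lemma round1_pmf_le i a a' r : differ_one_bit a a' ->
  round1_pmf eps mu i a r <= expR eps * round1_pmf eps mu i a' r.
Proof.
move=> [j0 [_ aa']].
apply: (ler_prod_change1 j0) => [j|j /aa' ->|].
- by case: ifP => _; [exact: arr_prob_ge0 | case: r].
- by [].
case: ifP => _; first exact: arr_prob_le.
by case: (r j0); rewrite ?mulr0 // mulr1 expR_eps_ge1.
Qed.

Lemma round1_pmf_lower i a a' r : (forall j : 'I_n, (j < i)%N -> a j = a' j) ->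
  round1_pmf eps mu i a r = round1_pmf eps mu i a' r.
Proof. by move=> aa'; apply: eq_bigr => j _; case: ifP => // /aa' ->. Qed.

Lemma t_countE i a M :
  t_count i a M = #|lower_pairs i (fun j k => [&& a j, a k & M j k])|.
Proof. by []. Qed.

Lemma s_countE i a : s_count i a = #|lower_pairs i (fun j k => a j && a k)|.
Proof. by []. Qed.

Lemma w_val_lower v i a a' M : (forall j : 'I_n, (j < i)%N -> a j = a' j) ->
  w_val v eps mu i a M = w_val v eps mu i a' M.
Proof.
move=> aa'.
have lower_eq (P : bool -> bool -> 'I_n -> 'I_n -> bool) :
    lower_pairs i (fun j k => P (a j) (a k) j k) =
    lower_pairs i (fun j k => P (a' j) (a' k) j k).
  by apply: eq_lower_pairs => j k jk ki; rewrite !aa' // (ltn_trans jk ki).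
rewrite /w_val !t_countE !s_countE (lower_eq (fun x y j k => [&& x, y & M j k])).
by rewrite (lower_eq (fun x y _ _ => x && y)).
Qed.

Lemma mustar_expRN_itv v :
  0 <= mustar v mu * expR (- eps) /\ mustar v mu * expR (- eps) <= 1.
Proof.
have mu_le1 := arr_mu_le1; have [r_gt0 r_le1] := expRN_itv.
have [ms_ge0 ms_le1] : 0 <= mustar v mu /\ mustar v mu <= 1.
  by case: v => /=; rewrite ?exprn_ge0 ?exprn_ile1.
by rewrite mulr_ge0 ?mulr_ile1 // ltW.
Qed.

(* Removing the neighbour [j0] removes from [s_i] only pairs through [j0],
   and from [t_i] only a subset of those. *)
Lemma w_val_remove_neighbour v (dmax : nat) i a a' M (j0 : 'I_n) :
  a j0 -> (forall k, k != j0 -> a k = a' k) -> deg_le dmax a ->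
  `|w_val v eps mu i a M - w_val v eps mu i a' M| <= dmax%:R.
Proof.
move=> aj0 aa' deg_a.
have a'_le : forall k, a' k -> a k.
  by move=> k; case: (eqVneq k j0) => [->|/aa' ->].
have [c_ge0 c_le1] := mustar_expRN_itv v.
have t_sub j k : [&& a' j, a' k & M j k] -> [&& a j, a k & M j k].
  by case/and3P=> /a'_le -> /a'_le -> ->.
have s_sub j k : a' j && a' k -> a j && a k.
  by case/andP=> /a'_le -> /a'_le.
rewrite /w_val !t_countE !s_countE.
rewrite (card_lower_pairs_split _ t_sub) (card_lower_pairs_split _ s_sub).
set x := #|lower_pairs _ (fun j k => [&& _, _ & _] && _)|.
set y := #|lower_pairs _ (fun j k => (_ && _) && _)|.
rewrite !natrD.
have -> : forall p q c : R, (p + x%:R - c * (q + y%:R)) - (p - c * q)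
    = x%:R - c * y%:R by move=> *; ring.
apply: norm_natB_scaled_le => //; apply/andP; split.
- apply/subset_leq_card/lower_pairsS => j k.
  by case: (a j) (a k) (a' j) (a' k) (M j k) => [] [] [] [] [].
- apply: leq_trans deg_a; apply: (card_lower_pairs_through _ j0) => j k.
  case/andP=> /andP[aj ak] na'; rewrite aj ak !andbT.
  by apply: contraNT na' => /norP[/aa' <- /aa' <-]; apply/andP.
Qed.

Lemma w_val_sensitivity v (dmax : nat) i a a' M :
  differ_one_bit a a' -> deg_le dmax a -> deg_le dmax a' ->
  `|w_val v eps mu i a M - w_val v eps mu i a' M| <= dmax%:R.
Proof.
move=> [j0 [aa'j0 aa']] deg_a deg_a'.
case aj0: (a j0); first by move: aj0 aa' deg_a; apply: w_val_remove_neighbour.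
have a'j0 : a' j0 by move: aa'j0; rewrite aj0; case: (a' j0).
have a'a k : k != j0 -> a' k = a k by move/aa'.
by rewrite distrC; move: a'j0 a'a deg_a'; apply: w_val_remove_neighbour.
Qed.

End Protocol.

Lemma lap_pdf_ge0 (R : realType) (b x : R) : 0 <= b -> 0 <= lap_pdf b x.
Proof. by move=> b_ge0; rewrite divr_ge0 ?expR_ge0 ?mulr_ge0. Qed.

Lemma lap_pdf_sub_le (R : realType) (d eps s x x' : R) :
  0 <= d -> 0 <= eps -> `|x - x'| <= d ->
  lap_pdf (d / eps) (s - x) <= expR eps * lap_pdf (d / eps) (s - x').
Proof.
move=> d_ge0 eps_ge0 xx'; rewrite /lap_pdf; set b := d / eps.
(* [b = 0] when [d = 0] or [eps = 0] ([x / 0 = 0]): the "density" is then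
   identically [0]. *)
have [->|b_neq0] := eqVneq b 0; first by rewrite !mulr0 invr0 !mulr0.
have b_ge0 : 0 <= b by rewrite divr_ge0.
have d_neq0 : d != 0 by apply: contraNneq b_neq0 => d0; rewrite /b d0 mul0r.
have d_div_b : d / b = eps by rewrite /b invf_div mulrCA mulfV ?mulr1.
have tri : `|s - x'| <= `|s - x| + `|x - x'| := ler_distD x s x'.
rewrite mulrA -expRD; apply: ler_wpM2r; first by rewrite invr_ge0 mulr_ge0.
rewrite ler_expR -d_div_b -mulrDl; apply: ler_wpM2r; first by rewrite invr_ge0.
lra.
Qed.

Lemma differ_one_edge_row {n : nat} {A A' : 'I_n -> 'I_n -> bool} :
  (forall x y, A x y = A y x) -> (forall x y, A' x y = A' y x) ->
  differ_one_edge A A' ->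
  exists i0 : 'I_n, differ_one_bit (A i0) (A' i0) /\
    forall i : 'I_n, i != i0 -> forall j : 'I_n, (j < i)%N -> A i j = A' i j.
Proof.
move=> symA symA' [u [w [uw [Auw only]]]].
wlog uw_lt : u w uw Auw only / (u < w)%N.
  move=> gen; case: (ltngtP u w) => [lt|gt|/val_inj eq].
  - exact: gen uw Auw only lt.
  - apply: (gen w u) => //.
    + by rewrite eq_sym.
    + by rewrite symA symA'.
    + by move=> x y /only; rewrite orbC.
  - by rewrite eq eqxx in uw.
exists w; split.
- exists u; split; first by rewrite symA symA'.
  move=> k k_neq; apply/eqP; apply: contraT => /only.
  by rewrite (negbTE k_neq) andbF orbF => /andP[/eqP wu _]; rewrite wu eqxx in uw.
- move=> i i_neq j ji; apply/eqP; apply: contraT.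
  move=> /only /orP[] /andP[/eqP ei /eqP ej]; subst i j.
  + by rewrite ltnNge ltnW in ji.
  + by rewrite eqxx in i_neq.
Qed.

Theorem theorem4p1 (R : realType) (v : variant) (n : nat)
  (eps1 eps2 mu : R) (dmax : nat) :
  0 <= eps1 -> 0 <= eps2 -> 0 <= mu -> mu <= expR eps1 / (expR eps1 + 1) ->
  (forall (i : 'I_n) (Rother : 'I_n -> 'I_n -> bool),
     edge_LDP (deg_le dmax) (eps1 + eps2)
       (local_density v eps1 eps2 mu dmax i Rother)) /\
  relationship_DP
    (fun A : 'I_n -> 'I_n -> bool =>
       simple_graph A /\ forall i, deg_le dmax (A i))
    (eps1 + eps2) (@joint_density R v eps1 eps2 mu dmax n).
Proof.
move=> eps1_ge0 eps2_ge0 mu_ge0 mu_le.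
have b_ge0 : 0 <= (dmax%:R / eps2 : R) by rewrite divr_ge0.
split.
- move=> i Rother a a' deg_a deg_a' aa' s.
  rewrite /local_density expRD mulrACA.
  apply: ler_pM; rewrite ?round1_pmf_ge0 ?lap_pdf_ge0 ?round1_pmf_le //.
  by apply: lap_pdf_sub_le => //; apply: w_val_sensitivity.
- move=> A A' [[symA _] deg_A] [[symA' _] deg_A'] AA' s.
  have [i0 [Ai0 A_lower]] := differ_one_edge_row symA symA' AA'.
  rewrite /joint_density expRD mulrACA.
  apply: ler_pM.
  + by apply: prodr_ge0 => i _; apply: round1_pmf_ge0.
  + by apply: prodr_ge0 => i _; apply: lap_pdf_ge0.
  + apply: (ler_prod_change1 i0) => [i|i /A_lower/round1_pmf_lower ->|] //.
    * exact: round1_pmf_ge0.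
    * exact: round1_pmf_le.
  + apply: (ler_prod_change1 i0) => [i|i /A_lower/w_val_lower ->|] //.
    * exact: lap_pdf_ge0.
    * by apply: lap_pdf_sub_le => //; apply: w_val_sensitivity.
Qed.
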